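(* For each $T$ and each $z\in L_T$, $\mathbb{P}$-almost surely the infimum in the definition of $h_T(z)$ is attained for some finite sequence $y_0,\dots,y_n\in L_T$ with $y_0=z$, $y_n=0$.
   Context: $(\xi(z))_{z\in\mathbb{Z}^d}$ are i.i.d. with $\mathbb{P}(\xi(z)>x)=x^{-\alpha}$ for $x\ge1$, $\alpha>d$. $|\cdot|$ is the $\ell_1$-norm. $q=d/(\alpha-d)$, $a(T)=(T/\log T)^q$, $r(T)=(T/\log T)^{q+1}$, $L_T=\{z\in\mathbb{R}^d:r(T)z\in\mathbb{Z}^d\}$, $\xi_T(z)=\xi(r(T)z)/a(T)$. For $z\in L_T$, \[h_T(z)=\inf\Big\{\sum_{j=1}^n q\frac{|y_{j-1}-y_j|}{\xi_T(y_j)}: n\ge0,\ y_0,\dots,y_n\in L_T,\ y_0=z,\ y_n=0\Big\}.\] *)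

From HB Require Import structures.
From mathcomp Require Import all_boot all_order all_algebra.
From mathcomp Require Import all_classical all_reals all_analysis.
Set Implicit Arguments.
Unset Strict Implicit.
Unset Printing Implicit Defensive.
Import Order.TTheory GRing.Theory Num.Theory.
Local Open Scope classical_set_scope.
Local Open Scope ring_scope.

Definition mutually_independent (dm : measure_display) (Omega : measurableType dm)
  (R : realType) (P : probability Omega R) (I : eqType) (X : I -> Omega -> R) : Prop :=
  forall (s : seq I) (B : I -> set R), uniq s -> (forall i, measurable (B i)) ->
    P (\bigcap_(i in [set` s]) (X i @^-1` B i)) =
    (\prod_(i <- s) P (X i @^-1` B i))%E.

Definition pareto_field (dm : measure_display) (Omega : measurableType dm)
  (R : realType) (P : probability Omega R) (d : nat) (alpha : R)
  (xi : 'rV[int]_d -> Omega -> R) : Prop :=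
  [/\ forall z, measurable_fun setT (xi z),
      mutually_independent P xi &
      forall z (x : R), 1 <= x ->
        P (xi z @^-1` `]x, +oo[) = (x `^ (- alpha))%:E].

Section Scaling.
Variables (R : realType) (d : nat) (alpha : R).

Definition norm1 (z : 'rV[R]_d) : R := \sum_(i < d) `|z 0 i|.

Definition qexp : R := d%:R / (alpha - d%:R).
Definition aT (T : R) : R := (T / ln T) `^ qexp.
Definition rT (T : R) : R := (T / ln T) `^ (qexp + 1).

Definition inLT (T : R) (z : 'rV[R]_d) : Prop :=
  exists k : 'rV[int]_d, rT T *: z = map_mx (fun n : int => n%:~R) k.

(* the lattice point r(T) z (exact for z in L_T) *)
Definition lattice_pt (T : R) (z : 'rV[R]_d) : 'rV[int]_d :=
  \row_i Num.floor (rT T * z 0 i).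

Definition xiT (xi : 'rV[int]_d -> R) (T : R) (z : 'rV[R]_d) : R :=
  xi (lattice_pt T z) / aT T.

(* cost of the path x = y_0, y_1, ..., y_n (ys = [:: y_1; ...; y_n]) *)
Fixpoint path_cost (xi : 'rV[int]_d -> R) (T : R) (x : 'rV[R]_d)
    (ys : seq 'rV[R]_d) : R :=
  match ys with
  | [::] => 0
  | y :: ys' => qexp * norm1 (x - y) / xiT xi T y + path_cost xi T y ys'
  end.

(* admissible paths from z to 0 in L_T (z itself is assumed in L_T) *)
Definition admissible (T : R) (z : 'rV[R]_d) (ys : seq 'rV[R]_d) : Prop :=
  (forall y, y \in ys -> inLT T y) /\ last z ys = 0.

Definition hT (xi : 'rV[int]_d -> R) (T : R) (z : 'rV[R]_d) : R :=
  inf [set path_cost xi T z ys | ys in admissible T z].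

End Scaling.

From HB Require Import structures.
From mathcomp Require Import all_boot all_order all_algebra.
From mathcomp Require Import all_classical all_reals all_analysis.
From mathcomp Require Import ring lra zify.
Import Order.TTheory GRing.Theory Num.Theory.
Local Open Scope classical_set_scope.
Local Open Scope ring_scope.

(* Almost surely xi > 1 everywhere, and for a fixed theta with
   2^(d/alpha) < theta < 2, eventually xi <= theta^k on the integer box of
   radius 2^k: by the union bound the opposite event has probability at most
   4^d (2^d theta^-alpha)^k, which is summable (Borel-Cantelli).  On such a
   realisation, a path that leaves the box of radius 2^(k+1) (after scaling by
   r(T)) must come back to the box of radius 2^k through a region where
   xi <= theta^(k+1); this costs at least a constant times (2/theta)^k, more
   than the direct path z -> 0 for k large.  Since erasing loops does not
   increase the cost, the infimum is a minimum over the finitely many loop-free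
   paths in a bounded piece of L_T. *)

Set Implicit Arguments.
Unset Strict Implicit.
Unset Printing Implicit Defensive.

Lemma seq_argmin (dX : Order.disp_t) (X : orderType dX) (A : eqType)
    (s : seq A) (p : A -> Prop) (f : A -> X) :
  (exists2 a, a \in s & p a) ->
  exists a, [/\ a \in s, p a & forall b, b \in s -> p b -> (f a <= f b)%O].
Proof.
elim: s => [|x s IH] [a]; first by rewrite in_nil.
rewrite inE => ha pa.
have [/IH [b [bs pb minb]]|none] := pselect (exists2 b, b \in s & p b); last first.
  have px : p x by case/orP: ha => [/eqP <- //|as_]; case: none; exists a.
  exists x; split; rewrite ?mem_head // => c; rewrite inE.
  by case/orP => [/eqP -> //|cs pc]; case: none; exists c.
have [minb_x|] := pselect (p x /\ (f x <= f b)%O).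
  case: minb_x => px fxb; exists x; split; rewrite ?mem_head // => c.
  by rewrite inE => /orP[/eqP -> //|cs pc]; exact: le_trans fxb (minb _ cs pc).
move=> notx; exists b; split; rewrite ?inE ?bs ?orbT // => c.
rewrite inE => /orP[/eqP -> px|]; last exact: minb.
by rewrite leNgt; apply/negP => fxb; apply: notx; split => //; exact: ltW.
Qed.

Fixpoint bounded_seqs (A : Type) (F : seq A) (n : nat) : seq (seq A) :=
  if n is n'.+1 then [::] :: [seq x :: l | x <- F, l <- bounded_seqs F n']
  else [:: [::]].

Lemma mem_bounded_seqs (A : eqType) (F : seq A) n ys :
  (size ys <= n)%N -> {subset ys <= F} -> ys \in bounded_seqs F n.
Proof.
elim: n ys => [|n IH] [|y ys] //=; rewrite ?mem_head // ltnS => hs sub.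
rewrite inE; apply/orP; right; apply: (allpairs_f (fun x l => x :: l)).
  by apply: sub; rewrite mem_head.
by apply: IH => // u u_ys; apply: sub; rewrite inE u_ys orbT.
Qed.

Lemma bernoulli_ineq (R : realDomainType) (h : R) n :
  0 <= h -> 1 + n%:R * h <= (1 + h) ^+ n.
Proof.
move=> h0; elim: n => [|n IH]; first by rewrite mul0r addr0 expr0.
rewrite exprS -natr1 mulrDl mul1r.
have : (1 + n%:R * h) * (1 + h) <= (1 + h) ^+ n * (1 + h).
  by rewrite ler_wpM2r // addr_ge0.
have : 0 <= n%:R * h * h by rewrite !mulr_ge0.
nra.
Qed.

Lemma expr_unbounded (R : archiRealFieldType) (rho c : R) (N : nat) :
  1 < rho -> exists2 k, (N <= k)%N & c < rho ^+ k.
Proof.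
move=> rho1; have h0 : 0 < rho - 1 by rewrite subr_gt0.
pose k := (N + Num.Def.archi_bound (`|c| / (rho - 1)))%N.
exists k; first exact: leq_addr.
have := archi_boundP (divr_ge0 (normr_ge0 c) (ltW h0)).
rewrite ltr_pdivrMr // => ck.
have := bernoulli_ineq k (ltW h0); rewrite [X in _ <= X ^+ _]addrC subrK.
have : (Num.Def.archi_bound (`|c| / (rho - 1)))%:R <= k%:R :> R.
  by rewrite ler_nat leq_addl.
have := ler_norm c.
nra.
Qed.

Lemma inf_attained (R : realType) (S : set R) x :
  S x -> (forall y, S y -> x <= y) -> inf S = x.
Proof.
move=> Sx lbx; apply/eqP; rewrite eq_le; apply/andP; split.
  by apply: ge_inf => //; exists x.
by apply: lb_le_inf => //; exists x.
Qed.

Definition box (d m : nat) : seq 'rV[int]_d :=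
  [seq \row_i ((f i : nat)%:Z - m%:Z)
  | f : {ffun 'I_d -> 'I_(2 * m).+1} <- enum {: {ffun 'I_d -> 'I_(2 * m).+1}}].

Lemma size_box d m : size (box d m) = ((2 * m).+1 ^ d)%N.
Proof. by rewrite size_map -cardE card_ffun !card_ord. Qed.

Lemma mem_box d m (x : 'rV[int]_d) :
  (forall i, `|x 0 i| <= m%:Z) -> x \in box d m.
Proof.
move=> xm; apply/mapP; exists [ffun i => inord (absz (x 0 i + m%:Z))].
  by rewrite mem_enum.
apply/rowP => i; rewrite !mxE ffunE inordK; last by have := xm i; lia.
by rewrite gez0_abs ?addrK //; have := xm i; lia.
Qed.

Section norm1.
Variables (R : realType) (d : nat).
Implicit Types x y : 'rV[R]_d.

Lemma norm1_ge0 x : 0 <= norm1 x.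
Proof. exact: sumr_ge0. Qed.

Lemma norm10 : norm1 (0 : 'rV[R]_d) = 0.
Proof. by rewrite /norm1 big1 // => i _; rewrite mxE normr0. Qed.

Lemma norm1_coord x i : `|x 0 i| <= norm1 x.
Proof. by rewrite /norm1 (bigD1 i) //= lerDl sumr_ge0. Qed.

Lemma norm1_triangle x y : norm1 x <= norm1 (x - y) + norm1 y.
Proof.
rewrite /norm1 -big_split /=; apply: ler_sum => i _.
by rewrite !mxE -[X in `|X|](subrK (y 0 i)) ler_normD.
Qed.

End norm1.

Section path_cost.
Variables (R : realType) (d : nat) (alpha T : R) (xi : 'rV[int]_d -> R).
Hypotheses (q_gt0 : 0 < qexp d alpha) (a_gt0 : 0 < aT d alpha T)
  (xi_gt0 : forall x, 0 < xi x).

Local Notation cost := (path_cost alpha xi T).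

Lemma xiT_gt0 y : 0 < xiT alpha xi T y.
Proof. by rewrite /xiT divr_gt0. Qed.

Lemma step_cost_ge0 x y : 0 <= qexp d alpha * norm1 (x - y) / xiT alpha xi T y.
Proof.
apply: divr_ge0; last exact: ltW (xiT_gt0 _).
by apply: mulr_ge0; [exact: ltW | exact: norm1_ge0].
Qed.

Lemma path_cost_ge0 x ys : 0 <= cost x ys.
Proof. by elim: ys x => [|y ys IH] x //=; rewrite addr_ge0 ?step_cost_ge0. Qed.

Lemma path_cost_cat x s t : cost x (s ++ t) = cost x s + cost (last x s) t.
Proof. by elim: s x => [|y s IH] x /=; rewrite ?add0r // IH addrA. Qed.

Lemma path_cost_loop_erasure x ys : exists ys',
  [/\ uniq ys', {subset ys' <= ys}, last x ys' = last x ys & cost x ys' <= cost x ys].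
Proof.
elim: ys x => [|y ys IH] x; first by exists [::].
have [s [us ss ls cs]] := IH y.
have [y_in | y_notin] := boolP (y \in s).
  case/splitPr: y_in us ss ls cs => b c + ss ls cs.
  rewrite cat_uniq => /and3P[_ _ uc].
  exists (y :: c); split => //.
  - move=> u; rewrite inE => /predU1P[-> |uc']; first exact: mem_head.
    by rewrite inE ss ?orbT // mem_cat inE uc' !orbT.
  - by rewrite /= -ls last_cat.
  rewrite /= lerD2l; apply: le_trans cs.
  by rewrite -cat_rcons path_cost_cat last_rcons lerDr path_cost_ge0.
exists (y :: s); split; rewrite /= ?y_notin ?lerD2l //.
by move=> u; rewrite !inE => /predU1P[->|/ss->]; rewrite ?eqxx ?orbT.
Qed.

End path_cost.

Definition box_growth (R : realType) (d : nat) (xi : 'rV[int]_d -> R) theta k :=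
  forall x, x \in box d (2 ^ k) -> xi x <= theta ^+ k.

Section lattice.
Variables (R : realType) (d : nat) (alpha T : R).
Local Notation r := (rT d alpha T).

Lemma inLT0 : inLT alpha T (0 : 'rV[R]_d).
Proof. by exists 0; rewrite scaler0; apply/rowP => i; rewrite !mxE. Qed.

Lemma lattice_ptE (y : 'rV[R]_d) :
  inLT alpha T y -> map_mx (fun n : int => n%:~R) (lattice_pt alpha T y) = r *: y.
Proof.
case=> k yk; rewrite yk; congr map_mx; apply/rowP => i.
by move/matrixP: yk => /(_ 0 i); rewrite !mxE => ->; rewrite intrKfloor.
Qed.

Hypothesis r_gt0 : 0 < r.

Lemma lattice_pt_in_box m (y : 'rV[R]_d) :
  inLT alpha T y -> r * norm1 y <= m%:R -> lattice_pt alpha T y \in box d m.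
Proof.
move=> yL ym; apply: mem_box => i.
have := lattice_ptE yL; move/matrixP /(_ 0 i); rewrite !mxE => yi.
rewrite -(ler_int R) intr_norm yi.
by rewrite normrM gtr0_norm // (le_trans _ ym) // ler_wpM2l ?(ltW r_gt0) ?norm1_coord.
Qed.

Definition lattice_ball m : seq 'rV[R]_d :=
  [seq r^-1 *: map_mx (fun n : int => n%:~R) x | x <- box d m].

Lemma mem_lattice_ball m (y : 'rV[R]_d) :
  inLT alpha T y -> r * norm1 y <= m%:R -> y \in lattice_ball m.
Proof.
move=> yL ym; apply/mapP; exists (lattice_pt alpha T y).
  exact: lattice_pt_in_box.
by rewrite lattice_ptE // scalerA mulVf ?scale1r // gt_eqF.
Qed.

End lattice.

Section escape.
Variables (R : realType) (d : nat) (alpha T theta : R) (xi : 'rV[int]_d -> R).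
Hypotheses (q_gt0 : 0 < qexp d alpha) (a_gt0 : 0 < aT d alpha T)
  (r_gt0 : 0 < rT d alpha T) (xi_gt0 : forall x, 0 < xi x) (theta_gt0 : 0 < theta).

Local Notation q := (qexp d alpha).
Local Notation a := (aT d alpha T).
Local Notation r := (rT d alpha T).
Local Notation cost := (path_cost alpha xi T).

Definition escape_cost k := q * a / (r * theta ^+ k.+1) * 2 ^+ k.

Lemma escape_costE k : escape_cost k = q * a / (r * theta) * (2 / theta) ^+ k.
Proof.
rewrite /escape_cost expr_div_n exprS.
by field; rewrite !gt_eqF ?exprn_gt0.
Qed.

Section level.
Variable k : nat.
Hypothesis growth_k1 : box_growth xi theta k.+1.

Let c := q * a / (r * theta ^+ k.+1).

Let c_ge0 : 0 <= c.
Proof.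
exact: ltW (divr_gt0 (mulr_gt0 q_gt0 a_gt0) (mulr_gt0 r_gt0 (exprn_gt0 _ theta_gt0))).
Qed.

(* The potential [rad] decreases by at least 2^k along a path from outside the
   box of r-radius 2^(k+1) to the box of r-radius 2^k, and inside the larger box
   each unit of decrease costs at least [c] because xi <= theta^(k+1) there. *)
Let rad (x : 'rV[R]_d) := Num.min (r * norm1 x) (2 ^+ k.+1).

Lemma step_cost_ge_rad x y : inLT alpha T y ->
  c * (rad x - rad y) <= q * norm1 (x - y) / xiT alpha xi T y.
Proof.
move=> yL; have [y_in|y_out] := leP (r * norm1 y) (2 ^+ k.+1); last first.
  have: rad x - rad y <= 0.
    by rewrite subr_le0 /rad (min_r (ltW y_out)) ge_min lexx orbT.
  move=> /(ler_wpM2l c_ge0); rewrite mulr0 => /le_trans; apply.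
  exact: step_cost_ge0.
have xi_le : xi (lattice_pt alpha T y) <= theta ^+ k.+1.
  by apply: growth_k1; apply: lattice_pt_in_box; rewrite // natrX.
have rad_lip : rad x - rad y <= r * norm1 (x - y).
  have := ler_wpM2l (ltW r_gt0) (norm1_triangle x y).
  have : rad x <= r * norm1 x by rewrite ge_min lexx.
  rewrite /rad (min_l y_in) mulrDr; lra.
apply: le_trans (ler_wpM2l c_ge0 rad_lip) _.
have qn_ge0 : 0 <= q * norm1 (x - y) by rewrite mulr_ge0 ?norm1_ge0 ?ltW.
rewrite /xiT invf_div /c mulrA.
have -> : q * a / (r * theta ^+ k.+1) * r * norm1 (x - y) =
    q * norm1 (x - y) * (a / theta ^+ k.+1).
  by field; rewrite !gt_eqF ?exprn_gt0.
rewrite ler_wpM2l // ler_wpM2l ?(ltW a_gt0) // lef_pV2 ?posrE ?exprn_gt0 //.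
Qed.

Lemma return_cost_ge x ys : (forall y, y \in ys -> inLT alpha T y) ->
  r * norm1 (last x ys) <= 2 ^+ k -> c * (rad x - 2 ^+ k) <= cost x ys.
Proof.
elim: ys x => [|y ys IH] x ysL /= end_in.
  by rewrite mulr_ge0_le0 // subr_le0 ge_min end_in.
have yL : inLT alpha T y by apply: ysL; rewrite mem_head.
have := step_cost_ge_rad x yL.
have := IH y (fun u u_ys => ysL u (@mem_behead _ (y :: ys) u u_ys)) end_in.
rewrite -[rad x - _](subrK (rad y)) -addrA [_ - rad y + _]addrC !mulrDr; lra.
Qed.

Lemma escape_cost_ge z ys y : admissible alpha T z ys -> y \in ys ->
  2 ^+ k.+1 < r * norm1 y -> escape_cost k <= cost z ys.
Proof.
move=> [ysL ys_end] y_in y_out; case/splitPr: y_in ysL ys_end => s t ysL ys_end.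
have rad_y : rad y = 2 ^+ k.+1 by rewrite /rad min_r // ltW.
have : c * (rad y - 2 ^+ k) <= cost y t.
  apply: return_cost_ge => [u ut|].
    by apply: ysL; rewrite mem_cat inE ut !orbT.
  by move: ys_end; rewrite last_cat /= => ->; rewrite norm10 mulr0 exprn_ge0.
rewrite rad_y exprS mulr_natl mulr2n addrK -/(escape_cost k) => /le_trans; apply.
rewrite path_cost_cat /= addrA lerDr addr_ge0 ?path_cost_ge0 ?step_cost_ge0 //.
Qed.

End level.

Lemma exists_min_cost (theta_lt2 : theta < 2) K0 z :
    (forall k, (K0 <= k)%N -> box_growth xi theta k) ->
  exists ys, admissible alpha T z ys /\
    forall ys', admissible alpha T z ys' -> cost z ys <= cost z ys'.
Proof.
move=> growth; set c0 := cost z [:: 0].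
have adm0 : admissible alpha T z [:: 0].
  by split=> // u; rewrite inE => /eqP ->; exact: inLT0.
have [k K0k c0_lt] : exists2 k, (K0 <= k)%N & c0 < escape_cost k.
  have C_gt0 : 0 < q * a / (r * theta).
    exact: divr_gt0 (mulr_gt0 q_gt0 a_gt0) (mulr_gt0 r_gt0 theta_gt0).
  have [|k K0k] := expr_unbounded (c0 / (q * a / (r * theta))) K0 (rho := 2 / theta).
    by rewrite ltr_pdivlMr // mul1r.
  by rewrite ltr_pdivrMr // mulrC => c0_lt; exists k; rewrite // escape_costE.
set F := @lattice_ball R d alpha T (2 ^ k.+1).
have F_sub u : inLT alpha T u -> r * norm1 u <= 2 ^+ k.+1 -> u \in F.
  by move=> uL u_in; apply: mem_lattice_ball; rewrite // natrX.
have c0_in : [:: 0] \in bounded_seqs F (size F).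
  have F0 : {subset [:: 0] <= F}.
    move=> u; rewrite inE => /eqP ->; apply: F_sub; first exact: inLT0.
    by rewrite norm10 mulr0 exprn_ge0.
  by apply: mem_bounded_seqs => //; exact: uniq_leq_size.
have [ys [_ ys_adm ys_min]] :
    exists ys, [/\ ys \in bounded_seqs F (size F), admissible alpha T z ys &
      forall b, b \in bounded_seqs F (size F) -> admissible alpha T z b ->
        cost z ys <= cost z b].
  by apply: seq_argmin; exists [:: 0].
exists ys; split => // ys' [ys'L ys'_end].
have [s [s_uniq s_sub s_end s_le]] := path_cost_loop_erasure q_gt0 a_gt0 xi_gt0 z ys'.
have s_adm : admissible alpha T z s.
  by split; [move=> u /s_sub; exact: ys'L | rewrite s_end].
apply: le_trans s_le.
have [[y y_s y_out]|s_in] := pselect (exists2 y, y \in s & 2 ^+ k.+1 < r * norm1 y).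
  have := escape_cost_ge (growth _ (leqW K0k)) s_adm y_s y_out.
  have := ys_min _ c0_in adm0; rewrite -/c0; lra.
have s_F : {subset s <= F}.
  move=> u us; apply: F_sub; first exact: ys'L (s_sub _ us).
  by rewrite leNgt; apply/negP => u_out; apply: s_in; exists u.
by apply: ys_min => //; apply: mem_bounded_seqs => //; exact: uniq_leq_size s_uniq s_F.
Qed.

Lemma hT_attained (theta_lt2 : theta < 2) K0 z :
    (forall k, (K0 <= k)%N -> box_growth xi theta k) ->
  exists ys, admissible alpha T z ys /\ cost z ys = hT alpha xi T z.
Proof.
move=> growth; have [ys [ys_adm ys_min]] := exists_min_cost theta_lt2 z growth.
exists ys; split => //; apply/esym/inf_attained; first by exists ys.
by move=> _ [ys' ys'_adm <-]; exact: ys_min.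
Qed.

End escape.

Section measure_lemmas.
Context d (T : measurableType d) (R : realType).
Variable mu : {measure set T -> \bar R}.

Lemma ae_forall_countable (I : countType) (Q : I -> T -> Prop) :
  (forall i, {ae mu, forall x, Q i x}) -> {ae mu, forall x i, Q i x}.
Proof.
move=> aeQ.
pose Qn n x := if @unpickle I n is Some i then Q i x else True.
have := @ae_foralln _ _ _ mu Qn.
case=> [n|]; first by rewrite /Qn; case: (unpickle n) => [i|]; [exact: aeQ | exact: aeW].
move=> N [mN N0 QN]; exists N; split => // x notQ.
apply: QN => allQ; apply: notQ => i.
by have := allQ (pickle i); rewrite /Qn pickleK.
Qed.

Lemma measure_big_setU_le (I : Type) (s : seq I) (A : I -> set T) :
  (forall i, measurable (A i)) ->
  (mu (\big[setU/set0]_(i <- s) A i) <= \sum_(i <- s) mu (A i))%E.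
Proof.
move=> mA; elim: s => [|i s IH]; first by rewrite !big_nil measure0.
rewrite !big_cons; apply: le_trans (measureU2 _ _ _) _ => //.
  exact: bigsetU_measurable.
exact: leeD2l.
Qed.

Lemma borel_cantelli (B : (set T)^nat) : (forall k, measurable (B k)) ->
    (\sum_(0 <= k <oo) mu (B k) < +oo)%E ->
  {ae mu, forall w, \forall k \near \oo, ~ B k w}.
Proof.
move=> mB sumB; pose limsupB := \bigcap_N \bigcup_(k in ~` `I_N) B k.
have m_limsupB : measurable limsupB.
  by apply: bigcapT_measurable => N; apply: bigcup_measurable => k _; exact: mB.
exists limsupB; split => //.
- apply/eqP; rewrite -measure_le0.
  have tail := nneseries_tail_cvg sumB (fun k _ => measure_ge0 mu (B k)).
  rewrite -(cvg_lim _ tail) //; apply: lime_ge.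
    by apply/cvg_ex; eexists; exact: tail.
  by apply: nearW => N; apply: measure_sigma_subadditive_tail => // w /(_ N I).
- move=> w /= not_ev N _; apply: contrapT => notB; apply: not_ev.
  by exists N => // k /= Nk Bk; apply: notB; exists k => //=; rewrite ltnNge Nk.
Qed.

End measure_lemmas.

Lemma nneseries_geometric_lt_pinfty (R : realType) (C g : R) :
  0 <= C -> 0 < g -> g < 1 -> (\sum_(0 <= k <oo) (C * g ^+ k)%:E < +oo)%E.
Proof.
move=> C0 g0 g1; apply: (@le_lt_trans _ _ (C / (1 - g))%:E); last exact: ltry.
apply: lime_le.
  apply: ereal_nondecreasing_is_cvgn => m n mn.
  apply: lee_sum_nneg_natr => // k _ _.
  by rewrite lee_fin mulr_ge0 // exprn_ge0 // ltW.
apply: nearW => n; rewrite sumEFin lee_fin.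
by have := @geometric_le_lim R n C g C0 g0; rewrite ger0_norm ?(ltW g0) //; apply.
Qed.

Lemma powR_exprn (R : realType) (x y : R) n :
  0 <= x -> (x ^+ n) `^ y = (x `^ y) ^+ n.
Proof. by move=> x0; rewrite -powR_mulrn // powRAC powR_mulrn // powR_ge0. Qed.

(* theta := 2^s with s := (alpha + d) / (2 alpha), so 2^(d/alpha) < theta < 2. *)
Lemma exists_growth_base (R : realType) (d : nat) (alpha : R) : d%:R < alpha ->
  exists2 theta, 1 < theta < 2 & 2 ^+ d * theta `^ (- alpha) < 1.
Proof.
move=> d_lt; have alpha_gt0 : 0 < alpha by apply: le_lt_trans d_lt.
pose s := (alpha + d%:R) / (2 * alpha); pose L := ln (2 : R).
have L_gt0 : 0 < L by rewrite ln_gt0 // ltr1n.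
have s_gt0 : 0 < s by rewrite divr_gt0 ?mulr_gt0 ?ltr_wpDr.
have s_lt1 : s < 1 by rewrite ltr_pdivrMr ?mulr_gt0 // mul1r; lra.
have two : (2 : R) = expR L by rewrite lnK // posrE.
exists (expR (s * L)); first by rewrite expR_gt1 mulr_gt0 //= two ltr_expR gtr_pMl.
rewrite {1}two -expRM_natl /powR gt_eqF ?expR_gt0 // expRK -expRD expR_lt1.
have -> : d%:R * L + - alpha * (s * L) = (d%:R - alpha) / 2 * L.
  by rewrite /s; field; rewrite gt_eqF.
by rewrite pmulr_llt0 // pmulr_llt0 // subr_lt0.
Qed.

Section pareto.
Context dm (Omega : measurableType dm) (R : realType) (P : probability Omega R).
Variables (d : nat) (alpha : R) (xi : 'rV[int]_d -> Omega -> R).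
Hypothesis xi_pareto : pareto_field P alpha xi.

Let exceed x t := xi x @^-1` `]t, +oo[.

Let exceed_measurable x t : measurable (exceed x t).
Proof.
case: xi_pareto => xi_meas _ _.
by have := xi_meas x measurableT _ (measurable_itv `]t, +oo[); rewrite setTI.
Qed.

Lemma pareto_ae_gt1 : {ae P, forall w x, 1 < xi x w}.
Proof.
case: xi_pareto => _ _ tail; apply: ae_forall_countable => x.
exists (~` exceed x 1); split; first exact: measurableC.
  transitivity (1 - P (exceed x 1%R))%E; first exact: probability_setC.
  by rewrite tail // powR1 subee.
by move=> w /= not_gt1; rewrite /exceed /= in_itv /= andbT.
Qed.

Lemma pareto_ae_box_growth theta : 1 < theta -> 2 ^+ d * theta `^ (- alpha) < 1 ->
  {ae P, forall w, \forall k \near \oo, box_growth (xi^~ w) theta k}.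
Proof.
case: xi_pareto => _ _ tail theta_gt1 g_lt1.
pose g0 := theta `^ (- alpha); pose g := 2 ^+ d * g0.
pose B k := \big[setU/set0]_(x <- box d (2 ^ k)) exceed x (theta ^+ k).
have B_measurable k : measurable (B k) by apply: bigsetU_measurable.
have PB k : (P (B k) <= (4 ^+ d * g ^+ k)%:E)%E.
  apply: le_trans (measure_big_setU_le P _ (fun x => exceed_measurable x _)) _.
  rewrite (eq_bigr (fun=> (g0 ^+ k)%:E)) => [|x _]; last first.
    rewrite /g0 -powR_exprn; last exact: ltW (lt_trans ltr01 theta_gt1).
    exact: tail (exprn_ege1 _ (ltW theta_gt1)).
  rewrite sumEFin big_const_seq count_predT size_box iter_addr_0 lee_fin.
  rewrite -[_ *+ _]mulr_natr.
  rewrite /g exprMn mulrA [_ * g0 ^+ k]mulrC ler_wpM2l ?exprn_ge0 ?powR_ge0 //.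
  rewrite exprAC -exprMn -natrX -natrM natrX lerXn2r ?nnegrE // ler_nat.
  by rewrite ltn_pmul2r ?expn_gt0.
have g_gt0 : 0 < g by rewrite mulr_gt0 ?exprn_gt0 ?powR_gt0 // (lt_trans ltr01).
apply: filterS (borel_cantelli (mu := P) B_measurable _); last first.
  have C_ge0 : 0 <= 4 ^+ d :> R by rewrite exprn_ge0.
  apply: le_lt_trans (nneseries_geometric_lt_pinfty C_ge0 g_gt0 g_lt1).
  by apply: lee_nneseries => [k _ _|k _]; [exact: measure_ge0 | exact: PB].
move=> w; apply: filterS => k notB x x_box; rewrite leNgt; apply/negP => xi_gt.
by apply: notB; rewrite /B (big_rem x) //=; left; rewrite /exceed /= in_itv /= andbT.
Qed.

End pareto.

Theorem lemma3p1 (dm : measure_display) (Omega : measurableType dm)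
  (R : realType) (P : probability Omega R) (d : nat) (alpha : R)
  (xi : 'rV[int]_d -> Omega -> R) :
  (0 < d)%N -> d%:R < alpha ->
  pareto_field P alpha xi ->
  forall (T : R), 1 < T ->
  forall z : 'rV[R]_d, inLT alpha T z ->
  {ae P, forall w, exists ys : seq 'rV[R]_d,
      admissible alpha T z ys /\
      path_cost alpha (xi^~ w) T z ys = hT alpha (xi^~ w) T z}.
Proof.
(* Only the points after z must lie in L_T, hence the unused hypothesis on z. *)
move=> d_gt0 d_lt xi_pareto T T_gt1 z _.
have q_gt0 : 0 < qexp d alpha by rewrite divr_gt0 ?ltr0n ?subr_gt0.
have scale_gt0 : 0 < T / ln T by rewrite divr_gt0 ?ln_gt0 // (lt_trans ltr01).
have a_gt0 : 0 < aT d alpha T by exact: powR_gt0.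
have r_gt0 : 0 < rT d alpha T by exact: powR_gt0.
have [theta /andP[theta_gt1 theta_lt2] base_lt1] := exists_growth_base d_lt.
apply: filterS2 (pareto_ae_gt1 xi_pareto)
  (pareto_ae_box_growth xi_pareto theta_gt1 base_lt1) => w xi_gt1 [K0 _ growth].
apply: (hT_attained q_gt0 a_gt0 r_gt0 _ _ theta_lt2 (K0 := K0)).
- by move=> x; exact: lt_trans ltr01 (xi_gt1 x).
- exact: lt_trans ltr01 theta_gt1.
- by move=> k K0k; exact: growth.
Qed.
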